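(* Let $n\ge 3$ and let $w(t)$ be the solution of \[ w''+\frac{n-1}{t}w'+e^{w}=0,\qquad w(0)=0,\quad w'(0)=0 \qquad (t>0). \] Set $\lambda(t)=t^2e^{w(t)}$. If $t_n>0$ satisfies $\lambda'(t_n)=0$ (that is, the corresponding solution of the Gelfand problem is singular), then $\lambda''(t_n)\neq 0$.
   Context: The Gelfand problem is $\Delta u+\lambda e^u=0$ for $|x|<1$ in $\mathbb{R}^n$, with $u=0$ on $|x|=1$. Its solutions are radial, $u=u(|x|)$. The solution $w$ above is defined for all $t>0$. The full solution set of the Gelfand problem is the curve $t\mapsto(\lambda(t),u_t)$, $t\in(0,\infty)$, where $u_t(x)=w(t|x|)-w(t)$ and $\lambda(t)=t^2e^{w(t)}$. *)

From Stdlib Require Import Reals.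
From Coquelicot Require Import Coquelicot.
Open Scope R_scope.

Definition gelfand_radial_solution (n : nat) (w : R -> R) : Prop :=
  (forall t, 0 < t ->
     ex_derive w t /\ ex_derive (Derive w) t /\
     Derive_n w 2 t + (INR n - 1) / t * Derive w t + exp (w t) = 0) /\
  w 0 = 0 /\
  filterlim w (at_right 0) (locally 0) /\
  filterlim (Derive w) (at_right 0) (locally 0).

Definition gelfand_lambda (w : R -> R) (t : R) : R := t ^ 2 * exp (w t).

From Stdlib Require Import Reals Lra Lia.
From Coquelicot Require Import Coquelicot.
Open Scope R_scope.

(* Along the solution put p = t w' + 2 and c = 2 (n - 2), the value of lambda on the
   singular solution w = ln c - 2 ln t.  The energy
     E(t) = (p^2 / 2 + lambda - c - c ln (lambda / c)) t^(2 (n - 2))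
   is nonnegative, and the ODE gives E' = c (lambda - c - c ln (lambda / c)) t^(2n - 5) >= 0.
   At a critical point t_n, lambda'(t_n) = 0 means p(t_n) = 0, and then lambda''(t_n) = 0
   would mean lambda(t_n) = c, i.e. E(t_n) = 0.  Monotonicity forces E = 0, hence p = 0,
   on (0, t_n): t w'(t) = -2 there, which is incompatible with w'(t) -> 0 as t -> 0+. *)

Lemma ln_le_sub1 x : 0 < x -> ln x <= x - 1.
Proof.
  intros Hx. pose proof (exp_ineq1_le (ln x)) as H. rewrite exp_ln in H by exact Hx. lra.
Qed.

Definition log_gap (c x : R) : R := x - c - c * ln (x / c).

Lemma log_gap_ge0 c x : 0 < c -> 0 < x -> 0 <= log_gap c x.
Proof.
  intros Hc Hx. unfold log_gap.
  assert (H : ln (x / c) <= x / c - 1) by (apply ln_le_sub1, Rdiv_lt_0_compat; assumption).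
  replace (x - c) with (c * (x / c - 1)) by (field; lra).
  pose proof (Rmult_le_compat_l c _ _ (Rlt_le _ _ Hc) H). lra.
Qed.

Lemma log_gap_diag c : c <> 0 -> log_gap c c = 0.
Proof. intros Hc. unfold log_gap. rewrite Rdiv_diag, ln_1 by exact Hc. ring. Qed.

Lemma filterlim_mul_id_at_right0 (f : R -> R) :
  filterlim f (at_right 0) (locally 0) ->
  filterlim (fun t => t * f t) (at_right 0) (locally 0).
Proof.
  intros Hf.
  assert (Hid : filterlim (fun t => t) (at_right 0) (locally 0)).
  { intros P [eps HP]. exists eps. intros t Ht _. apply HP, Ht. }
  pose proof (filterlim_comp_2 _ _ Rmult Hid Hf (filterlim_mult 0 0)) as H.
  change (mult 0 0) with (0 * 0) in H. rewrite Rmult_0_l in H. exact H.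
Qed.

Lemma mul_id_not_const_at_right0 (f : R -> R) (b c : R) :
  0 < b -> c <> 0 -> filterlim f (at_right 0) (locally 0) ->
  ~ (forall t, 0 < t < b -> t * f t = c).
Proof.
  intros Hb Hc Hf Hconst. apply Hc.
  apply (filterlim_locally_unique (FF := Proper_StrongProper _ (at_right_proper_filter 0))
           (fun _ : R => c)); [apply filterlim_const |].
  apply (filterlim_ext_loc (fun t => t * f t)); [| apply filterlim_mul_id_at_right0, Hf].
  exists (mkposreal b Hb). intros t Ht Ht0. apply Hconst. split; [exact Ht0 |].
  unfold ball in Ht; simpl in Ht; unfold AbsRing_ball, abs, minus, plus, opp in Ht; simpl in Ht.
  rewrite Ropp_0, Rplus_0_r, Rabs_pos_eq in Ht; lra.
Qed.

Definition gelfand_const (n : nat) : R := 2 * (INR n - 2).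

Lemma gelfand_const_pos n : (3 <= n)%nat -> 0 < gelfand_const n.
Proof. intros Hn. apply le_INR in Hn. unfold gelfand_const. simpl in Hn. lra. Qed.

Lemma INR_gelfand_exponent n : (2 <= n)%nat -> INR (2 * (n - 2)) = gelfand_const n.
Proof. intros Hn. unfold gelfand_const. rewrite mult_INR, minus_INR by exact Hn. simpl. ring. Qed.

Definition gelfand_energy (n : nat) (w : R -> R) (t : R) : R :=
  ((t * Derive w t + 2) ^ 2 / 2 + log_gap (gelfand_const n) (gelfand_lambda w t))
  * t ^ (2 * (n - 2)).

Lemma gelfand_lambda_pos w t : 0 < t -> 0 < gelfand_lambda w t.
Proof. intros Ht. apply Rmult_lt_0_compat; [apply pow_lt, Ht | apply exp_pos]. Qed.

Lemma Derive_gelfand_lambda w t : ex_derive w t ->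
  Derive (gelfand_lambda w) t = t * exp (w t) * (t * Derive w t + 2).
Proof.
  intros Hw. apply is_derive_unique. unfold gelfand_lambda. auto_derive; [exact Hw |].
  change (Derive (fun x => w x) t) with (Derive w t). ring.
Qed.

Section RadialGelfandODE.

Variables (n : nat) (w : R -> R).
Hypothesis n_ge3 : (3 <= n)%nat.
Hypothesis w_ode : forall t, 0 < t ->
  ex_derive w t /\ ex_derive (Derive w) t /\
  Derive_n w 2 t + (INR n - 1) / t * Derive w t + exp (w t) = 0.

Lemma Derive2_gelfand_lambda t : 0 < t ->
  Derive_n (gelfand_lambda w) 2 t =
  exp (w t) * ((t * Derive w t + 2) * (t * Derive w t + 3 - INR n)
               + gelfand_const n - gelfand_lambda w t).
Proof.
  intros Ht. destruct (w_ode t Ht) as [Hw [Hw' Hode]].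
  change (Derive_n (gelfand_lambda w) 2 t) with (Derive (Derive (gelfand_lambda w)) t).
  rewrite (Derive_ext_loc _ (fun s => s * exp (w s) * (s * Derive w s + 2))).
  - apply is_derive_unique. auto_derive; [repeat split; assumption |].
    change (Derive (fun x => Derive w x) t) with (Derive_n w 2 t).
    change (Derive (fun x => w x) t) with (Derive w t).
    replace (Derive_n w 2 t) with (- ((INR n - 1) / t * Derive w t) - exp (w t)) by lra.
    unfold gelfand_lambda, gelfand_const. field. lra.
  - exists (mkposreal t Ht). intros s Hs. apply Derive_gelfand_lambda, w_ode.
    unfold ball in Hs; simpl in Hs; unfold AbsRing_ball, abs, minus, plus, opp in Hs; simpl in Hs.
    apply Rabs_lt_between in Hs. lra.
Qed.

Lemma is_derive_gelfand_energy t : 0 < t ->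
  is_derive (gelfand_energy n w) t
    (gelfand_const n * log_gap (gelfand_const n) (gelfand_lambda w t)
     * t ^ (2 * (n - 2)) / t).
Proof.
  intros Ht. destruct (w_ode t Ht) as [Hw [Hw' Hode]].
  pose proof (gelfand_const_pos n n_ge3) as Hc.
  pose proof (exp_pos (w t)) as He.
  unfold gelfand_energy, log_gap, gelfand_lambda. auto_derive.
  { repeat split; try assumption. apply Rdiv_lt_0_compat; [| exact Hc].
    apply Rmult_lt_0_compat; [nra | exact He]. }
  change (Derive (fun x => Derive w x) t) with (Derive_n w 2 t).
  change (Derive (fun x => w x) t) with (Derive w t).
  change (n - 2 + (n - 2 + 0))%nat with (2 * (n - 2))%nat.
  rewrite INR_gelfand_exponent by lia.
  replace (t * (t * 1)) with (t ^ 2) by ring. unfold Rdiv.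
  set (m := pred (2 * (n - 2))). replace (2 * (n - 2))%nat with (S m) by lia.
  change (t ^ S m) with (t * t ^ m).
  replace (Derive_n w 2 t) with (- ((INR n - 1) / t * Derive w t) - exp (w t)) by lra.
  unfold gelfand_const in *. field. lra.
Qed.

Lemma gelfand_energy_nondecreasing s t : 0 < s -> s <= t ->
  gelfand_energy n w s <= gelfand_energy n w t.
Proof.
  intros Hs Hst. destruct (Rle_lt_or_eq_dec s t Hst) as [Hlt | ->]; [| lra].
  pose proof (gelfand_const_pos n n_ge3) as Hc.
  destruct (MVT_gen (gelfand_energy n w) s t (fun x =>
      gelfand_const n * log_gap (gelfand_const n) (gelfand_lambda w x)
      * x ^ (2 * (n - 2)) / x)) as [xi [Hxi Heq]];
    rewrite Rmin_left, Rmax_right in * by lra.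
  - intros x Hx. apply is_derive_gelfand_energy. lra.
  - intros x Hx. apply continuity_pt_filterlim, (ex_derive_continuous (gelfand_energy n w)).
    eexists. apply is_derive_gelfand_energy. lra.
  - assert (Hrate : 0 <= gelfand_const n * log_gap (gelfand_const n) (gelfand_lambda w xi)
                         * xi ^ (2 * (n - 2)) / xi).
    { apply Rdiv_le_0_compat; [| lra].
      apply Rmult_le_pos; [apply Rmult_le_pos; [lra |] | apply pow_le; lra].
      apply log_gap_ge0; [exact Hc | apply gelfand_lambda_pos; lra]. }
    nra.
Qed.

Lemma gelfand_energy_nonpos t : 0 < t -> gelfand_energy n w t <= 0 ->
  t * Derive w t + 2 = 0.
Proof.
  intros Ht HG. unfold gelfand_energy in HG.
  assert (Hgap : 0 <= log_gap (gelfand_const n) (gelfand_lambda w t)).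
  { apply log_gap_ge0; [exact (gelfand_const_pos n n_ge3) | apply gelfand_lambda_pos, Ht]. }
  assert (Hsum : (t * Derive w t + 2) ^ 2 / 2
                 + log_gap (gelfand_const n) (gelfand_lambda w t) <= 0).
  { apply (Rmult_le_reg_r (t ^ (2 * (n - 2)))); [apply pow_lt, Ht | lra]. }
  nra.
Qed.

Lemma gelfand_energy_critical t :
  t * Derive w t + 2 = 0 -> gelfand_lambda w t = gelfand_const n -> gelfand_energy n w t = 0.
Proof.
  intros Hp Hlam. unfold gelfand_energy.
  rewrite Hp, Hlam, log_gap_diag by apply Rgt_not_eq, gelfand_const_pos, n_ge3.
  apply Rmult_eq_0_compat_r. field.
Qed.

End RadialGelfandODE.

Theorem theorem5p1 (n : nat) (w : R -> R) :
  (3 <= n)%nat ->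
  gelfand_radial_solution n w ->
  forall tn : R, 0 < tn ->
    Derive (gelfand_lambda w) tn = 0 ->
    Derive_n (gelfand_lambda w) 2 tn <> 0.
Proof.
  intros Hn [Hode [_ [_ Hw'0]]] tn Htn Hcrit Hcrit2.
  pose proof (exp_pos (w tn)) as He.
  assert (Hp : tn * Derive w tn + 2 = 0).
  { rewrite Derive_gelfand_lambda in Hcrit by apply (Hode tn Htn).
    apply Rmult_integral in Hcrit as [H | H]; [| exact H].
    apply Rmult_integral in H as [H | H]; lra. }
  assert (Hlam : gelfand_lambda w tn = gelfand_const n).
  { rewrite (Derive2_gelfand_lambda n w Hode tn Htn), Hp in Hcrit2.
    apply Rmult_integral in Hcrit2 as [H | H]; lra. }
  apply (mul_id_not_const_at_right0 (Derive w) tn (-2)); [exact Htn | lra | exact Hw'0 |].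
  intros t Ht.
  enough (Hpt : t * Derive w t + 2 = 0) by lra.
  apply (gelfand_energy_nonpos n w Hn); [lra |].
  rewrite <- (gelfand_energy_critical n w Hn tn Hp Hlam).
  apply (gelfand_energy_nondecreasing n w Hn Hode); lra.
Qed.
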